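(* The addition operation on $\mathbb{Q}$ is not definable in the structure $\langle\mathbb{Q};<,\times\rangle$; that is, there is no first-order formula $\varphi(x,y,z)$ in the language $\{<,\times\}$ such that for all rationals $a,b,c$, $\langle\mathbb{Q};<,\times\rangle\models\varphi(a,b,c)$ iff $c=a+b$. *)

From mathcomp Require Import all_boot all_order all_algebra.
Set Implicit Arguments. Unset Strict Implicit. Unset Printing Implicit Defensive.
Import Order.TTheory GRing.Theory Num.Theory.
Local Open Scope ring_scope.

Inductive term : Type :=
| TVar : nat -> term
| TMul : term -> term -> term.

Inductive formula : Type :=
| FEq  : term -> term -> formula
| FLt  : term -> term -> formula
| FNot : formula -> formula
| FAnd : formula -> formula -> formula
| FOr  : formula -> formula -> formula
| FImp : formula -> formula -> formula
| FEx  : nat -> formula -> formula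
| FAll : nat -> formula -> formula.

Definition assignment := nat -> rat.

Definition upd (e : assignment) (x : nat) (q : rat) : assignment :=
  fun y => if y == x then q else e y.

Fixpoint teval (e : assignment) (t : term) : rat :=
  match t with
  | TVar x => e x
  | TMul t1 t2 => teval e t1 * teval e t2
  end.

Fixpoint sat (e : assignment) (phi : formula) : Prop :=
  match phi with
  | FEq t1 t2 => teval e t1 = teval e t2
  | FLt t1 t2 => teval e t1 < teval e t2
  | FNot p => ~ sat e p
  | FAnd p q => sat e p /\ sat e q
  | FOr p q => sat e p \/ sat e q
  | FImp p q => sat e p -> sat e q
  | FEx x p => exists r : rat, sat (upd e x r) p
  | FAll x p => forall r : rat, sat (upd e x r) p
  end.

Fixpoint free_in (y : nat) (phi : formula) : bool :=
  let ft := fix ft (t : term) : bool :=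
    match t with TVar x => x == y | TMul a b => ft a || ft b end in
  match phi with
  | FEq a b | FLt a b => ft a || ft b
  | FNot p => free_in y p
  | FAnd p q | FOr p q | FImp p q => free_in y p || free_in y q
  | FEx x p | FAll x p => (x != y) && free_in y p
  end.

(** Every nonzero rational is a sign times an element of the multiplicative
    group Q_{>0}, which is free abelian on the primes, and a term of {<, x}
    evaluates to a product of variables. So the truth of an atomic formula under
    an assignment depends only on the signs of the values and on which monomials
    in their absolute values lie below 1. Say that two tuples of positive
    rationals have the same B-type when their monomials with exponents bounded
    by B lie on the same side of 1 and are n-th powers (n <= B) simultaneously.

    Having the same type survives adding one element to both tuples, at the
    price of shrinking the bound (an Ehrenfeucht-Fraisse step). If the new
    element s is multiplicatively dependent on the tuple, its partner is the
    corresponding root on the other side. Otherwise, with N = B!, a prime not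
    occurring in the other tuple yields a partner t with the same N-th power
    classes as s, and a factor w^N, which does not change these classes, places
    the partner in the same cut as s. By induction on formulas, assignments with
    the same signs and types satisfy the same formulas. As 2 and 3 are both
    primes, the assignments (1, 1, 2) and (1, 1, 3) are equivalent in this sense
    for every bound, yet only the first satisfies z = x + y. *)

From mathcomp Require Import all_boot all_order all_algebra.
From mathcomp Require Import zify ring lra.
From Stdlib Require Import Classical Wf_nat.
Set Implicit Arguments. Unset Strict Implicit. Unset Printing Implicit Defensive.
Import Order.TTheory GRing.Theory Num.Theory.
Local Open Scope ring_scope.

(** * p-adic valuations *)

Definition pval (p : nat) (x : rat) : int :=
  (logn p `|numq x|)%:Z - (logn p `|denq x|)%:Z.

Lemma pval_frac p (m n : int) : m != 0 -> n != 0 ->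
  pval p (m%:~R / n%:~R) = (logn p `|m|)%:Z - (logn p `|n|)%:Z.
Proof.
move=> m0 n0; rewrite /pval; set x : rat := _ / _.
have x0 : x != 0 by rewrite /x mulf_eq0 invr_eq0 !intr_eq0 negb_or m0 n0.
have e : numq x * n = m * denq x.
  apply: (@intr_inj rat); rewrite !rmorphM /= numqE /x.
  by field; rewrite intr_eq0.
have e2 : (`|numq x| * `|n|)%N = (`|m| * `|denq x|)%N by rewrite -!abszM e.
have nq0 : (0 < `|numq x|)%N by rewrite absz_gt0 numq_eq0.
have dq0 : (0 < `|denq x|)%N by rewrite absz_gt0 denq_neq0.
have n0' : (0 < `|n|)%N by rewrite absz_gt0.
have m0' : (0 < `|m|)%N by rewrite absz_gt0.
have := congr1 (logn p) e2; rewrite !lognM //; lia.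
Qed.

Lemma pval1 p : pval p 1 = 0.
Proof. by rewrite /pval /= logn1. Qed.

Lemma pval_prime p : prime p -> pval p p%:R = 1.
Proof.
move=> p_pr; rewrite -[p%:R]divr1 -[p%:R]/((p%:Z)%:~R) -[1]/((1%:Z)%:~R).
by rewrite pval_frac // ?logn1 ?logn_prime ?eqxx // -lt0n prime_gt0.
Qed.

Lemma pvalM p (x y : rat) : x != 0 -> y != 0 -> pval p (x * y) = pval p x + pval p y.
Proof.
move=> x0 y0.
have -> : x * y = (numq x * numq y)%:~R / (denq x * denq y)%:~R.
  by rewrite !rmorphM /= -{1}(divq_num_den x) -{1}(divq_num_den y) invfM; ring.
rewrite pval_frac ?mulf_neq0 ?denq_neq0 ?numq_eq0 // !abszM /pval.
have nx : (0 < `|numq x|)%N by rewrite absz_gt0 numq_eq0.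
have ny : (0 < `|numq y|)%N by rewrite absz_gt0 numq_eq0.
have dx : (0 < `|denq x|)%N by rewrite absz_gt0 denq_neq0.
have dy : (0 < `|denq y|)%N by rewrite absz_gt0 denq_neq0.
rewrite !lognM //; lia.
Qed.

Lemma pvalV p (x : rat) : x != 0 -> pval p x^-1 = - pval p x.
Proof.
by move=> x0; have := pvalM p x0 (invr_neq0 x0); rewrite mulfV // pval1; lia.
Qed.

Lemma pvalXn p (x : rat) (n : nat) : x != 0 -> pval p (x ^+ n) = n%:Z * pval p x.
Proof.
move=> x0; elim: n => [|n IH]; first by rewrite expr0 pval1 mul0r.
by rewrite exprS pvalM ?expf_neq0 // IH; lia.
Qed.

Lemma pvalXz p (x : rat) (z : int) : x != 0 -> pval p (x ^ z) = z * pval p x.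
Proof.
move=> x0; case: z => n; first by rewrite -exprnP pvalXn.
by rewrite NegzE -exprnN pvalV ?expf_neq0 // pvalXn //; lia.
Qed.

Lemma pval_small p (x : rat) : prime p -> x != 0 ->
  (`|numq x| < p)%N -> (`|denq x| < p)%N -> pval p x = 0.
Proof.
move=> p_pr x0 num_lt den_lt.
have logn0 n : (0 < n < p)%N -> logn p n = 0%N.
  by case/andP=> n0 np; rewrite logn_coprime // prime_coprime // gtnNdvd.
rewrite /pval !logn0 ?num_lt ?den_lt ?andbT ?absz_gt0 ?denq_neq0 ?numq_eq0 //.
Qed.

Lemma fresh_prime W (f : nat -> rat) : exists2 q, prime q &
  forall i, (i < W)%N -> f i != 0 -> pval q (f i) = 0.
Proof.
pose m := (\max_(i < W) (`|numq (f i)| + `|denq (f i)|))%N.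
have [q m_lt_q q_pr] := prime_above m; exists q => // i iW fi0.
have le_m : (`|numq (f i)| + `|denq (f i)| <= m)%N.
  exact: (@leq_bigmax _ (fun i : 'I_W => `|numq (f i)| + `|denq (f i)|)%N (Ordinal iW)).
by apply: pval_small => //; lia.
Qed.

(** * Monomials in tuples of positive rationals *)

(* Tuples and exponent vectors are indexed by nat; only the entries below W
   matter. *)
Definition monom (W : nat) (a : nat -> rat) (c : nat -> int) : rat :=
  \prod_(i < W) a i ^ c i.

Definition positive (W : nat) (a : nat -> rat) := forall i, (i < W)%N -> 0 < a i.

Definition bounded (B W : nat) (c : nat -> int) :=
  forall i, (i < W)%N -> (`|c i| <= B)%N.

Definition extend (T : Type) (a : nat -> T) (W : nat) (x : T) : nat -> T :=
  fun i => if i == W then x else a i.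

Lemma monom_gt0 W a c : positive W a -> 0 < monom W a c.
Proof. by move=> pa; apply: prodr_gt0 => i _; apply: exprz_gt0; apply: pa. Qed.

Lemma eq_monom W a b c d : (forall i, (i < W)%N -> a i ^ c i = b i ^ d i) ->
  monom W a c = monom W b d.
Proof. by move=> h; apply: eq_bigr => i _; apply: h. Qed.

Lemma monomD W a c d : positive W a ->
  monom W a (fun i => c i + d i) = monom W a c * monom W a d.
Proof.
move=> pa; rewrite /monom -big_split /=; apply: eq_bigr => i _.
by rewrite expfzDr // gt_eqF // pa.
Qed.

Lemma monomZ W a c (m : int) : monom W a (fun i => m * c i) = monom W a c ^ m.
Proof.
rewrite /monom (big_morph (fun x => x ^ m) (fun x y => expfzMl x y m) (exp1rz _ m)).
by apply: eq_bigr => i _; rewrite exprz_exp mulrC.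
Qed.

Lemma monomN W a c : monom W a (fun i => - c i) = (monom W a c)^-1.
Proof. by rewrite -exprN1 -monomZ; apply: eq_monom => i _; rewrite mulN1r. Qed.

Lemma monom0 W a : monom W a (fun=> 0) = 1.
Proof. by rewrite /monom big1. Qed.

Lemma monom_ltE W a c d : positive W a ->
  (monom W a c < monom W a d) = (monom W a (fun i => c i - d i) < 1).
Proof.
move=> pa; have -> : monom W a c = monom W a (fun i => c i - d i) * monom W a d.
  by rewrite -monomD //; apply: eq_monom => i _; rewrite subrK.
by rewrite -{2}[monom W a d]mul1r ltr_pM2r // monom_gt0.
Qed.

Lemma monom_extend W a s c : monom W.+1 (extend a W s) c = monom W a c * s ^ c W.
Proof.
rewrite /monom big_ord_recr /= /extend eqxx; congr (_ * _).
by apply: eq_bigr => i _; rewrite ltn_eqF.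
Qed.

Lemma monom_extend0 W a s c : c W = 0 -> monom W.+1 (extend a W s) c = monom W a c.
Proof. by move=> cW; rewrite monom_extend cW expr0z mulr1. Qed.

Lemma positive_extend W a s : positive W a -> 0 < s -> positive W.+1 (extend a W s).
Proof.
by move=> pa s0 i; rewrite ltnS leq_eqVlt /extend; case: eqP => //= _; apply: pa.
Qed.

Lemma pval_monom p W a c : positive W a ->
  pval p (monom W a c) = \sum_(i < W) c i * pval p (a i).
Proof.
elim: W => [|W IH] pa; first by rewrite /monom !big_ord0 pval1.
have pa' : positive W a by move=> i iW; apply/pa/ltnW.
rewrite /monom !big_ord_recr /= pvalM ?expfz_neq0 ?gt_eqF ?(monom_gt0 c pa') ?pa //.
by rewrite -IH // pvalXz // gt_eqF // pa.
Qed.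

Definition is_pow (n : nat) (q : rat) := exists2 w : rat, 0 < w & q = w ^+ n.

Lemma is_pow_exprn n z : 0 < z -> is_pow n (z ^+ n).
Proof. by exists z. Qed.

Lemma is_powM n x y : is_pow n x -> is_pow n y -> is_pow n (x * y).
Proof. by move=> [w w0 ->] [u u0 ->]; exists (w * u); rewrite ?mulr_gt0 ?exprMn. Qed.

Lemma is_powXz n x (j : int) : is_pow n x -> is_pow n (x ^ j).
Proof.
move=> [w w0 ->]; exists (w ^ j); first exact: exprz_gt0.
by rewrite !exprnP !exprz_exp mulrC.
Qed.

Lemma is_powMr n x u : 0 < x -> is_pow n u -> is_pow n (x * u) <-> is_pow n x.
Proof.
move=> x0 [v v0 ->]; split => [|xn]; last by apply: is_powM => //; exists v.
move=> xvn; rewrite (_ : x = (x * v ^+ n) * v^-1 ^+ n).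
  by apply: is_powM => //; apply: is_pow_exprn; rewrite invr_gt0.
by rewrite exprVn -mulrA mulfV ?mulr1 // expf_neq0 // gt_eqF.
Qed.

Lemma is_pow_exprM n k x : 0 < x -> (0 < k)%N ->
  is_pow n x <-> is_pow (n * k) (x ^+ k).
Proof.
move=> x0 k0; split=> [[w w0 ->]|[w w0 e]]; exists w => //; first by rewrite exprM.
by apply/eqP; rewrite -(eqrXn2 k0) ?ltW ?exprn_gt0 // e -exprM.
Qed.

(** * Tuples of the same type and the extension step *)

Definition same_type (B W : nat) (a a' : nat -> rat) :=
  [/\ positive W a, positive W a' &
      forall c, bounded B W c ->
        (monom W a c < 1) = (monom W a' c < 1) /\
        forall n, (0 < n <= B)%N -> is_pow n (monom W a c) <-> is_pow n (monom W a' c)].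

Lemma same_type_sym B W a a' : same_type B W a a' -> same_type B W a' a.
Proof.
move=> [pa pa' h]; split => // c bc; have [lt1 pow] := h c bc.
by split => // n nB; rewrite pow.
Qed.

Lemma same_type_transfer B B2 W W2 a a' b b' : (B2 <= B)%N ->
  same_type B W a a' -> positive W2 b -> positive W2 b' ->
  (forall c, bounded B2 W2 c -> exists2 c2, bounded B W c2 &
     monom W2 b c = monom W a c2 /\ monom W2 b' c = monom W a' c2) ->
  same_type B2 W2 b b'.
Proof.
move=> B2B [pa pa' h] pb pb' tr; split => // c bc.
have [c2 bc2 [-> ->]] := tr c bc; have [lt1 pow] := h c2 bc2.
split => // n /andP[n0 nB2]; apply: pow; rewrite n0; exact: leq_trans B2B.
Qed.

Lemma eq_same_type B W a a' b b' :
  (forall i, (i < W)%N -> a i = b i) -> (forall i, (i < W)%N -> a' i = b' i) ->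
  same_type B W a a' -> same_type B W b b'.
Proof.
move=> ab ab' st; have [pa pa' _] := st.
apply: (same_type_transfer (leqnn B) st) => [i iW|i iW|c bc].
- by rewrite -ab ?pa.
- by rewrite -ab' ?pa'.
by exists c => //; split; apply: eq_monom => i iW; rewrite ?ab ?ab'.
Qed.

Lemma same_type_le B B2 W a a' : (B2 <= B)%N ->
  same_type B W a a' -> same_type B2 W a a'.
Proof.
move=> B2B st; have [pa pa' _] := st; apply: (same_type_transfer B2B st pa pa').
by move=> c bc; exists c => // i /bc le_cB2; apply: leq_trans le_cB2 B2B.
Qed.

Lemma monom_extend_pow W a s c d : positive W a -> 0 < s ->
  monom W.+1 (extend a W s) c = 1 ->
  monom W.+1 (extend a W s) d ^ c W = monom W a (fun i => c W * d i - d W * c i).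
Proof.
move=> pa s0 dep; have pe := positive_extend pa s0.
rewrite -monomZ (@eq_monom _ _ (extend a W s) _
  (fun i => (c W * d i - d W * c i) + d W * c i)).
  by rewrite monomD // monomZ dep exp1rz mulr1 monom_extend0 // mulrC subrr.
by move=> i _; rewrite subrK.
Qed.

Lemma same_type_extend_dep B W a a' s c : same_type (2 * B * B) W a a' -> 0 < s ->
  bounded B W.+1 c -> 0 < c W -> monom W.+1 (extend a W s) c = 1 ->
  exists2 s', 0 < s' & same_type B W.+1 (extend a W s) (extend a' W s').
Proof.
move=> [pa pa' ha] s0 bc cW0 dep.
(* s^k is a monomial in a, so its partner is a k-th root of the same monomial
   in a'. *)
set k := `|c W|%N.
have ck : c W = k%:Z by rewrite /k gez0_abs // ltW.
have k_gt0 : (0 < k)%N by rewrite /k absz_gt0 gt_eqF.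
have kB : (k <= B)%N by apply: bc.
have bcN : bounded (2 * B * B) W (fun i => - c i).
  by move=> i iW; rewrite abszN; have := bc i (ltnW iW); nia.
have s_root : monom W a (fun i => - c i) = s ^+ k.
  rewrite monomN -[LHS]mulr1 -dep monom_extend ck -exprnP mulrA mulVf ?mul1r //.
  by rewrite gt_eqF // monom_gt0.
have [w w0 w_root] : is_pow k (monom W a' (fun i => - c i)).
  have [_ pow] := ha _ bcN; apply/pow; first by apply/andP; split => //; nia.
  by rewrite s_root; apply: is_pow_exprn.
exists w => //.
have dep' : monom W.+1 (extend a' W w) c = 1.
  by rewrite monom_extend ck -exprnP -w_root monomN mulfV // gt_eqF // monom_gt0.
have pe := positive_extend pa s0; have pe' := positive_extend pa' w0.
split => // d bd.
set D := fun i => c W * d i - d W * c i.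
have bD : bounded (2 * B * B) W D.
  move=> i iW; rewrite /D; have := bd i (ltnW iW); have := bc i (ltnW iW).
  by have := bd W (ltnSn W); move: kB ck; clear; nia.
have powk b u : positive W b -> 0 < u -> monom W.+1 (extend b W u) c = 1 ->
    monom W.+1 (extend b W u) d ^+ k = monom W b D.
  by move=> pb u0 depb; rewrite exprnP -ck monom_extend_pow.
have [ltD powD] := ha D bD; split.
  rewrite -(expr_lt1 k_gt0 (ltW (monom_gt0 d pe))).
  by rewrite -(expr_lt1 k_gt0 (ltW (monom_gt0 d pe'))) !powk.
move=> n /andP[n0 nB].
rewrite (is_pow_exprM n (monom_gt0 d pe) k_gt0) (is_pow_exprM n (monom_gt0 d pe') k_gt0).
by rewrite !powk //; apply: powD; rewrite muln_gt0 n0 k_gt0 /=; nia.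
Qed.

Lemma int_subgroup_dvd (R : int -> Prop) (N : nat) : (0 < N)%N -> R N ->
  (forall k1 k2 m, R k1 -> R k2 -> R (k1 - m * k2)) ->
  exists2 d : nat, R d & forall k, R k -> (d %| k)%Z.
Proof.
move=> N0 RN Rsub.
pose Rpos d := R d%:Z /\ (0 < d)%N.
have exRpos : exists d, Rpos d by exists N.
have [d [[[Rd d0] dmin] _]] :=
  dec_inh_nat_subset_has_unique_least_element Rpos (fun d => classic (Rpos d)) exRpos.
exists d => // k Rk; apply/dvdz_mod0P/eqP; apply: contraT => rn0.
have Rr : R (k %% d)%Z.
  have -> : (k %% d)%Z = k - (k %/ d)%Z * d by rewrite {2}(divz_eq k d); ring.
  exact: Rsub.
have r_ge0 : 0 <= (k %% d)%Z by rewrite modz_ge0 // lt0n_neq0.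
have r_lt : (k %% d)%Z < d by rewrite ltz_pmod.
have Rpos_r : Rpos `|(k %% d)%Z|%N by rewrite /Rpos gez0_abs // absz_gt0.
by have /ssrnat.leP := dmin _ Rpos_r; lia.
Qed.

Lemma root_exponent N W a s : (0 < N)%N -> positive W a -> 0 < s ->
  exists d c1, [/\ (d %| N)%N, c1 W = d%:Z, forall i, (i < W)%N -> 0 <= c1 i < N%:Z,
    is_pow N (monom W.+1 (extend a W s) c1) &
    forall c, is_pow N (monom W.+1 (extend a W s) c) -> (d%:Z %| c W)%Z].
Proof.
move=> N0 pa s0; have pe := positive_extend pa s0.
pose R k := exists2 c, c W = k & is_pow N (monom W.+1 (extend a W s) c).
have RN : R N.
  exists (extend (fun=> 0) W N%:Z); first by rewrite /extend eqxx.
  rewrite monom_extend.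
  have -> : monom W a (extend (fun=> 0) W N%:Z) = 1.
    by rewrite -(monom0 W a); apply: eq_monom => i iW; rewrite /extend ltn_eqF.
  by rewrite mul1r /extend eqxx -exprnP; apply: is_pow_exprn.
have Rsub k1 k2 m : R k1 -> R k2 -> R (k1 - m * k2).
  move=> [c1 e1 h1] [c2 e2 h2]; exists (fun i => c1 i + (- m) * c2 i).
    by rewrite e1 e2 mulNr.
  by rewrite monomD // monomZ; apply: is_powM => //; apply: is_powXz.
have [d [c cW c_pow] d_dvd] := int_subgroup_dvd N0 RN Rsub.
pose e i := if i == W then 0 else (c i %/ N)%Z.
exists d, (fun i => c i + (- N%:Z) * e i); split.
- exact: d_dvd _ RN.
- by rewrite /e eqxx mulr0 addr0.
- move=> i iW; rewrite /e ltn_eqF //.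
  have -> : c i + - N%:Z * (c i %/ N)%Z = (c i %% N)%Z.
    by rewrite {1}(divz_eq (c i) N%:Z); ring.
  by rewrite modz_ge0 ?ltz_pmod // lt0n_neq0.
- rewrite monomD // monomZ; apply: is_powM => //.
  by rewrite -exprnN -exprVn; apply: is_pow_exprn; rewrite invr_gt0 monom_gt0.
- by move=> c' c'_pow; apply: d_dvd; exists c'.
Qed.

Section RootPartner.

Variables (B N W d : nat) (a a' : nat -> rat) (s : rat) (c1 : nat -> int).
Hypotheses (st : same_type B W a a') (s_gt0 : 0 < s).
Hypotheses (N_gt0 : (0 < N)%N) (d_dvd_N : (d %| N)%N) (c1W : c1 W = d%:Z).
Hypothesis c1_range : forall i, (i < W)%N -> 0 <= c1 i < N%:Z.
Hypothesis c1_pow : is_pow N (monom W.+1 (extend a W s) c1).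

Let d_gt0 : (0 < d)%N. Proof. exact: dvdn_gt0 d_dvd_N. Qed.
Let pa : positive W a. Proof. by case: st. Qed.
Let pa' : positive W a'. Proof. by case: st. Qed.

Lemma partner_root : (N <= B)%N -> is_pow d (monom W a' (fun i => - c1 i)).
Proof.
move=> N_le_B; have [_ _ st_a] := st.
have bc1 : bounded B W (fun i => - c1 i).
  by move=> i iW; rewrite abszN; have := c1_range iW; lia.
apply/((st_a _ bc1).2 d); first by rewrite d_gt0 (leq_trans (dvdn_leq N_gt0 d_dvd_N)).
have [z z0] := c1_pow; rewrite monom_extend c1W -exprnP => ez.
exists (s / z ^+ (N %/ d)); first by rewrite divr_gt0 // exprn_gt0.
rewrite monomN exprMn exprVn -exprM divnK // -ez invfM mulrCA mulfV ?mulr1 //.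
by rewrite expf_neq0 // gt_eqF.
Qed.

Hypothesis c1_min : forall c, is_pow N (monom W.+1 (extend a W s) c) -> (d%:Z %| c W)%Z.
Variables (y : rat) (q : nat).
Hypotheses (y_gt0 : 0 < y) (y_root : monom W a' (fun i => - c1 i) = y ^+ d).
Hypothesis q_prime : prime q.
Hypothesis q_fresh : forall i, (i <= W)%N -> pval q (extend a' W y i) = 0.

(* The fresh prime q makes the W-exponents of the N-th powers among monomials
   in (a', t) the multiples of d, as they are for (a, s). *)
Let t := y * q%:R ^+ (N %/ d).
Let q_gt0 : (0 : rat) < q%:R. Proof. by rewrite ltr0n prime_gt0. Qed.
Let t_gt0 : 0 < t. Proof. by rewrite mulr_gt0 // exprn_gt0. Qed.

Lemma partner_c1_pow : is_pow N (monom W.+1 (extend a' W t) c1).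
Proof.
rewrite monom_extend c1W -exprnP /t exprMn -y_root -exprM divnK // monomN.
by rewrite mulrA mulfV ?mul1r ?gt_eqF ?monom_gt0 //; apply: is_pow_exprn.
Qed.

Lemma partner_pow_dvd c : is_pow N (monom W.+1 (extend a' W t) c) -> (d%:Z %| c W)%Z.
Proof.
move=> [u u0 /(congr1 (pval q))].
rewrite pval_monom; last exact: positive_extend pa' t_gt0.
rewrite pvalXn ?gt_eqF // big_ord_recr /= big1 => [|i _]; last first.
  have := q_fresh (ltnW (ltn_ord i)); rewrite /extend (ltn_eqF (ltn_ord i)).
  by move=> ->; rewrite mulr0.
have := q_fresh (leqnn W); rewrite /extend eqxx => q_y.
rewrite add0r /t pvalM ?gt_eqF ?exprn_gt0 // q_y pvalXn ?gt_eqF //.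
rewrite pval_prime // add0r mulr1 -{2}(divnK d_dvd_N) PoszM => e.
have Nd_gt0 : (0 < N %/ d)%N by rewrite divn_gt0 // dvdn_leq.
apply/dvdzP; exists (pval q u); apply: (mulfI (_ : (N %/ d)%:Z != 0)); first by lia.
by rewrite mulrC e; ring.
Qed.

Lemma is_pow_partner K c : (K.+1 * N <= B)%N -> bounded K W.+1 c ->
  is_pow N (monom W.+1 (extend a W s) c) <-> is_pow N (monom W.+1 (extend a' W t) c).
Proof.
move=> KB bc; have [/dvdzP[j cj]|ndvd] := boolP (d%:Z %| c W)%Z; last first.
  by split=> [/c1_min|/partner_pow_dvd]; rewrite (negbTE ndvd).
have pe := positive_extend pa s_gt0; have pe' := positive_extend pa' t_gt0.
set D := fun i => c i - j * c1 i.
have split_c b : positive W.+1 b ->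
    monom W.+1 b c = monom W.+1 b D * monom W.+1 b c1 ^ j.
  by move=> pb; rewrite -monomZ -monomD //; apply: eq_monom => i _; rewrite subrK.
have DW : D W = 0 by rewrite /D cj c1W; ring.
have jK : (`|j| <= K)%N.
  by have := bc W (ltnSn W); rewrite cj abszM; move: d_gt0; clear; nia.
have bD : bounded B W D.
  move=> i iW; rewrite /D; have := bc i (ltnW iW); have := c1_range iW.
  by move: jK KB; clear; nia.
rewrite !split_c // (is_powMr (monom_gt0 _ pe) (is_powXz j c1_pow)).
rewrite (is_powMr (monom_gt0 _ pe') (is_powXz j partner_c1_pow)) !monom_extend0 //.
have [_ _ pow] := st; apply: (pow D bD).2; rewrite N_gt0 /=.
by move: KB N_gt0; clear; nia.
Qed.

End RootPartner.

(** * Placing a power of a rational in an interval *)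

Lemma exists_natr_gt (x : rat) : exists n : nat, x < n%:R.
Proof.
have [x0|x_lt0] := leP 0 x; first by exists (Num.bound x); apply: archi_boundP.
by exists 0%N.
Qed.

Lemma bernoulli_ineq (n : nat) (x : rat) : 0 <= x -> 1 + n%:R * x <= (1 + x) ^+ n.
Proof.
move=> x0; elim: n => [|n IH]; first by rewrite expr0 mul0r addr0.
have : (1 + x) * (1 + n%:R * x) <= (1 + x) * (1 + x) ^+ n by rewrite ler_pM2l //; lra.
have : 0 <= n%:R * x * x by rewrite !mulr_ge0.
by rewrite exprS -natr1; nra.
Qed.

Lemma expr1D_le (n : nat) (x : rat) : 0 <= x <= 1 ->
  (1 + x) ^+ n <= 1 + ((2 ^ n)%:R - 1) * x.
Proof.
move=> /andP[x0 x1]; elim: n => [|n IH]; first by rewrite expr0 expn0 subrr mul0r addr0.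
rewrite exprS expnS natrM; set m : rat := (2 ^ n)%:R in IH *.
have m1 : 1 <= m by rewrite ler1n expn_gt0.
have : (1 + x) * (1 + x) ^+ n <= (1 + x) * (1 + (m - 1) * x) by rewrite ler_pM2l //; lra.
have : 0 <= (m - 1) * (x - x * x) by apply: mulr_ge0; nra.
by nra.
Qed.

Lemma crossing_index (u : nat -> rat) (lo : rat) : u 0%N <= lo ->
  (exists i, lo < u i) -> exists i, u i <= lo < u i.+1.
Proof.
move=> u0 ex_i; case: (ex_minnP ex_i) => -[|i] lo_ui i_min.
  by move: lo_ui; rewrite ltNge u0.
by exists i; rewrite lo_ui andbT leNgt; apply/negP => /i_min; rewrite ltnn.
Qed.

Lemma exprn_unbounded (w0 r M : rat) (k : nat) : 0 < w0 -> 1 < r -> (0 < k)%N ->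
  exists i, M < (w0 * r ^+ i) ^+ k.
Proof.
move=> w00 r1 k0; set M1 := Num.max M 1.
have M1_ge1 : 1 <= M1 by rewrite le_max lexx orbT.
have r1_gt0 : 0 < r - 1 by rewrite subr_gt0.
have [i] := exists_natr_gt (M1 / (w0 * (r - 1))).
rewrite ltr_pdivrMr ?mulr_gt0 // => M1_lt_i.
have M1_lt : M1 < w0 * r ^+ i.
  have := bernoulli_ineq i (ltW r1_gt0); rewrite [1 + (r - 1)]addrC subrK.
  by rewrite -(ler_pM2l w00); nra.
exists i; apply: le_lt_trans (_ : M <= M1) _; first by rewrite le_max lexx.
apply: (lt_le_trans M1_lt); apply: (ler_eXnr k0); exact: le_trans M1_ge1 (ltW M1_lt).
Qed.

Lemma dense_pow (k : nat) (lo hi : rat) : (0 < k)%N -> 0 < lo -> lo < hi ->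
  exists2 w, 0 < w & lo < w ^+ k < hi.
Proof.
move=> k0 lo0 lohi; set K : rat := (2 ^ k)%:R.
have K1 : 1 <= K by rewrite ler1n expn_gt0.
have [D hD] := exists_natr_gt (lo * K / (hi - lo)).
have D0 : (0 < D)%N.
  by rewrite -(ltr0n rat); apply: le_lt_trans hD; rewrite divr_ge0 ?mulr_ge0 //; lra.
set x : rat := D%:R^-1; set r := 1 + x.
have x0 : 0 < x by rewrite invr_gt0 ltr0n.
have x1 : x <= 1 by rewrite invf_le1 ?ltr0n // ler1n.
have step : lo * r ^+ k < hi.
  have : r ^+ k <= 1 + (K - 1) * x by apply: expr1D_le; rewrite ltW.
  have Dx : D%:R * (hi - lo) * x = hi - lo.
    by rewrite mulrAC /x mulfV ?mul1r // pnatr_eq0 -lt0n.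
  have : lo * K * x < D%:R * (hi - lo) * x by rewrite ltr_pM2r // -ltr_pdivrMr ?subr_gt0.
  rewrite Dx.
  have : 0 <= lo * x by rewrite mulr_ge0 // ltW.
  by nra.
set w0 := Num.min lo 1.
have w00 : 0 < w0 by rewrite lt_min lo0 ltr01.
have w0_lo : w0 ^+ k <= lo.
  apply: le_trans (ler_iXnr k0 (ltW w00) _) _; first by rewrite ge_min lexx orbT.
  by rewrite ge_min lexx.
have r_gt1 : 1 < r by rewrite /r ltrDl.
have ex_big := exprn_unbounded lo w00 r_gt1 k0.
have [|i /andP[lo_i i_hi]] := @crossing_index (fun i => (w0 * r ^+ i) ^+ k) lo _ ex_big.
  by rewrite expr0 mulr1.
exists (w0 * r ^+ i.+1); first by rewrite mulr_gt0 // exprn_gt0 // addr_gt0.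
rewrite i_hi exprSr mulrA exprMn /=.
have : (w0 * r ^+ i) ^+ k * r ^+ k <= lo * r ^+ k by rewrite ler_pM2r // exprn_gt0 // addr_gt0.
by move: step; lra.
Qed.

Lemma exists_between (xs ys : seq rat) :
  {in ys, forall y, 0 < y} -> {in xs & ys, forall x y, x < y} ->
  exists lo hi, [/\ 0 <= lo, lo < hi, {in xs, forall x, x <= lo} & {in ys, forall y, hi <= y}].
Proof.
move=> ys_gt0 xs_lt_ys.
have [lo [lo0 xs_le lo_lt]] :
    exists lo, [/\ 0 <= lo, {in xs, forall x, x <= lo} & {in ys, forall y, lo < y}].
  elim: xs xs_lt_ys => [|x xs IH] lt_xy; first by exists 0; split=> // y /ys_gt0.
  have [lo [lo0 le_lo lo_lt]] :=
    IH (fun u v u_in => lt_xy u v (mem_behead (s := x :: xs) u_in)).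
  exists (Num.max x lo); split; first by rewrite le_max lo0 orbT.
    by move=> z; rewrite inE le_max => /predU1P[->|/le_lo ->]; rewrite ?lexx ?orbT.
  by move=> y y_in; rewrite gt_max lo_lt // lt_xy ?mem_head.
suff [hi lo_hi hi_le] : exists2 hi, lo < hi & {in ys, forall y, hi <= y}.
  by exists lo, hi.
elim: ys lo_lt {ys_gt0 xs_lt_ys} => [|y ys IH] lt_lo; first by exists (lo + 1) => //; lra.
have [hi lo_hi hi_le] := IH (fun z z_in => lt_lo z (mem_behead (s := y :: ys) z_in)).
exists (Num.min y hi); first by rewrite lt_min lo_hi lt_lo ?mem_head.
by move=> z; rewrite inE ge_min => /predU1P[->|/hi_le ->]; rewrite ?lexx ?orbT.
Qed.

Lemma pow_between (I : finType) (L U : pred I) (g : I -> rat) (k : nat) : (0 < k)%N ->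
  (forall j, U j -> 0 < g j) -> (forall i j, L i -> U j -> g i < g j) ->
  exists2 w, 0 < w & forall i, (L i -> g i < w ^+ k) /\ (U i -> w ^+ k < g i).
Proof.
move=> k0 gU_gt0 gL_lt_gU.
have [|x y|lo [hi [lo0 lo_hi lo_ub hi_lb]]] :=
    @exists_between [seq g i | i <- enum L] [seq g j | j <- enum U].
- by move=> y /mapP[j]; rewrite mem_enum => Uj ->; apply: gU_gt0.
- move=> /mapP[i]; rewrite mem_enum => Li -> /mapP[j]; rewrite mem_enum => Uj ->.
  exact: gL_lt_gU.
have lo'_gt0 : 0 < Num.max lo (hi / 2) by rewrite lt_max; apply/orP; right; lra.
have lo'_hi : Num.max lo (hi / 2) < hi by rewrite gt_max lo_hi; lra.
have [w w0 /andP[lo_w w_hi]] := dense_pow k0 lo'_gt0 lo'_hi.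
exists w => // i; split=> [Li|Ui].
  apply: le_lt_trans lo_w; rewrite le_max lo_ub //.
  by apply: map_f; rewrite mem_enum.
by apply: lt_le_trans w_hi (hi_lb _ _); apply: map_f; rewrite mem_enum.
Qed.

(* The exponent vectors bounded by B, enumerated by a finite type: entry j
   stands for j - B. *)
Definition vec_of (B W : nat) (f : {ffun 'I_W -> 'I_(2 * B).+1}) : nat -> int :=
  fun i => if (insub i : option 'I_W) is Some j then (f j)%:Z - B%:Z else 0.

Lemma bounded_vec_of B W (f : {ffun 'I_W -> 'I_(2 * B).+1}) : bounded B W (vec_of f).
Proof. by move=> i iW; rewrite /vec_of insubT /=; case: (f _) => x /= xB; lia. Qed.

Lemma vec_ofP B W c : bounded B W c ->
  exists f : {ffun 'I_W -> 'I_(2 * B).+1}, forall i, (i < W)%N -> vec_of f i = c i.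
Proof.
move=> bc; exists [ffun j : 'I_W => inord `|c (val j) + B%:Z|] => i iW.
by rewrite /vec_of insubT /= ffunE SubK inordK; have := bc i iW; lia.
Qed.

Definition cut_exponent (N W : nat) (c : nat -> int) : nat -> int :=
  fun i => - ((N %/ `|c W|)%N%:Z * c i).

Lemma bounded_cut_exponent B N W c :
  bounded B W.+1 c -> bounded (N * B) W (cut_exponent N W c).
Proof.
move=> bc i iW; rewrite /cut_exponent abszN abszM absz_nat.
by apply: leq_mul; [exact: leq_div | exact: bc (ltnW iW)].
Qed.

Lemma boundedB B1 B2 W c d : bounded B1 W c -> bounded B2 W d ->
  bounded (B1 + B2) W (fun i => c i - d i).
Proof. by move=> bc bd i iW; have := bc i iW; have := bd i iW; lia. Qed.

Lemma extend_cmp1 W a s c N : positive W a -> 0 < s -> (0 < N)%N ->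
  0 < c W -> (`|c W| %| N)%N ->
  (monom W.+1 (extend a W s) c < 1) = (s ^+ N < monom W a (cut_exponent N W c)) /\
  (1 < monom W.+1 (extend a W s) c) = (monom W a (cut_exponent N W c) < s ^+ N).
Proof.
move=> pa s0 N0 cW0 cW_dvd; set k := (N %/ `|c W|)%N; set v := monom W a _.
have k0 : (0 < k)%N by rewrite divn_gt0 ?absz_gt0 ?gt_eqF // dvdn_leq.
have kcW : k%:Z * c W = N%:Z by rewrite /k -{2}[c W]gez0_abs ?ltW // -PoszM divnK.
have e : monom W.+1 (extend a W s) c ^+ k = s ^+ N / v.
  rewrite exprnP -monomZ monom_extend kcW -exprnP /v /cut_exponent.
  by rewrite monomN invrK mulrC.
have m0 := ltW (monom_gt0 c (positive_extend pa s0)).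
have v0 : 0 < v by apply: monom_gt0.
by rewrite -(expr_lt1 k0 m0) -(expr_gt1 k0 m0) e ltr_pdivrMr // ltr_pdivlMr // !mul1r.
Qed.

Section Cut.

Variables (B N W : nat) (a a' : nat -> rat) (s t : rat).
Hypotheses (N_gt0 : (0 < N)%N) (dvdN : forall k, (0 < k <= B)%N -> (k %| N)%N).
Hypotheses (st : same_type (2 * (N * B)) W a a') (s_gt0 : 0 < s) (t_gt0 : 0 < t).
Hypothesis indep :
  forall c, bounded B W.+1 c -> 0 < c W -> monom W.+1 (extend a W s) c != 1.

Let pa : positive W a. Proof. by case: st. Qed.
Let pa' : positive W a'. Proof. by case: st. Qed.

Let cmpE c b u : positive W b -> 0 < u -> bounded B W.+1 c -> 0 < c W ->
  (monom W.+1 (extend b W u) c < 1) = (u ^+ N < monom W b (cut_exponent N W c)) /\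
  (1 < monom W.+1 (extend b W u) c) = (monom W b (cut_exponent N W c) < u ^+ N).
Proof.
move=> pb u0 bc cW0; apply: extend_cmp1 => //.
by apply: dvdN; rewrite absz_gt0 gt_eqF //; exact: bc.
Qed.

Lemma cut_exponent_lt c1 c2 : bounded B W.+1 c1 -> bounded B W.+1 c2 ->
  0 < c1 W -> 0 < c2 W ->
  1 < monom W.+1 (extend a W s) c1 -> monom W.+1 (extend a W s) c2 < 1 ->
  monom W a' (cut_exponent N W c1) < monom W a' (cut_exponent N W c2).
Proof.
move=> bc1 bc2 c1W c2W gt1 lt1; rewrite monom_ltE //.
have bd : bounded (2 * (N * B)) W
    (fun i => cut_exponent N W c1 i - cut_exponent N W c2 i).
  by rewrite mul2n -addnn; apply: boundedB; apply: bounded_cut_exponent.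
have [_ _ st_a] := st; rewrite -(st_a _ bd).1 -monom_ltE //.
apply: (@lt_trans _ _ (s ^+ N)); first by rewrite -(cmpE pa s_gt0 bc1 c1W).2.
by rewrite -(cmpE pa s_gt0 bc2 c2W).1.
Qed.

(* Raised to the power N / c W, a monomial with c W > 0 compares with 1 as s^N
   compares with a monomial in a. The finitely many monomials below s^N stay
   below those above it on the side of a', and w^(N * N) is chosen between
   them. *)
Lemma cut_extend_pos : exists2 w, 0 < w & forall c, bounded B W.+1 c -> 0 < c W ->
  (monom W.+1 (extend a W s) c < 1) = (monom W.+1 (extend a' W (t * w ^+ N)) c < 1) /\
  (1 < monom W.+1 (extend a W s) c) = (1 < monom W.+1 (extend a' W (t * w ^+ N)) c).
Proof.
pose T := {ffun 'I_W.+1 -> 'I_(2 * B).+1}.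
pose L (f : T) := (0 < vec_of f W) && (1 < monom W.+1 (extend a W s) (vec_of f)).
pose U (f : T) := (0 < vec_of f W) && (monom W.+1 (extend a W s) (vec_of f) < 1).
pose g (f : T) := monom W a' (cut_exponent N W (vec_of f)) / t ^+ N.
have [||f1 f2 /andP[f1W f1L] /andP[f2W f2U]|w w0 wP] := @pow_between T L U g (N * N).
- by rewrite muln_gt0 N_gt0.
- by move=> f _; rewrite divr_gt0 ?monom_gt0 ?exprn_gt0.
- rewrite ltr_pM2r ?invr_gt0 ?exprn_gt0 //.
  exact: cut_exponent_lt (bounded_vec_of f1) (bounded_vec_of f2) f1W f2W f1L f2U.
have s'0 : 0 < t * w ^+ N by rewrite mulr_gt0 // exprn_gt0.
exists w => // c bc cW0; have [f f_c] := vec_ofP bc.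
have eq_c b u : monom W.+1 (extend b W u) c = monom W.+1 (extend b W u) (vec_of f).
  by apply: eq_monom => i iW; rewrite f_c.
have fW : 0 < vec_of f W by rewrite f_c.
rewrite !eq_c; have [-> ->] := cmpE pa' s'0 (bounded_vec_of f) fW.
have -> : ((t * w ^+ N) ^+ N < monom W a' (cut_exponent N W (vec_of f))) =
    (w ^+ (N * N) < g f).
  by rewrite /g ltr_pdivlMr ?exprn_gt0 // exprMn -exprM mulrC.
have -> : (monom W a' (cut_exponent N W (vec_of f)) < (t * w ^+ N) ^+ N) =
    (g f < w ^+ (N * N)).
  by rewrite /g ltr_pdivrMr ?exprn_gt0 // exprMn -exprM mulrC.
have [fL fU] := wP f; have := indep (bounded_vec_of f) fW.
case: ltrgtP => // [lt1 _|gt1 _].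
  have w_lt : w ^+ (N * N) < g f by apply: fU; rewrite /U fW lt1.
  by rewrite w_lt ltNge (ltW w_lt).
have lt_w : g f < w ^+ (N * N) by apply: fL; rewrite /L fW gt1.
by rewrite lt_w ltNge (ltW lt_w).
Qed.

Lemma cut_extend : exists2 w, 0 < w & forall c, bounded B W.+1 c ->
  (monom W.+1 (extend a W s) c < 1) = (monom W.+1 (extend a' W (t * w ^+ N)) c < 1).
Proof.
have [w w0 cut_pos] := cut_extend_pos.
have s'0 : 0 < t * w ^+ N by rewrite mulr_gt0 // exprn_gt0.
exists w => // c bc; case: (ltrgtP (c W) 0) => [cW_lt0|cW_gt0|cW0].
- have bcN : bounded B W.+1 (fun i => - c i) by move=> i /bc; rewrite abszN.
  have monomNN b u : monom W.+1 (extend b W u) c =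
      (monom W.+1 (extend b W u) (fun i => - c i))^-1.
    by rewrite -monomN; apply: eq_monom => i _; rewrite opprK.
  have pe := positive_extend pa s_gt0; have pe' := positive_extend pa' s'0.
  rewrite !monomNN !invf_lt1 ?monom_gt0 //.
  by apply: (cut_pos _ bcN _).2; rewrite oppr_gt0.
- exact: (cut_pos c bc cW_gt0).1.
- have [_ _ st_a] := st; rewrite !monom_extend0 //; apply: (st_a c _).1 => i iW.
  by have := bc i (ltnW iW); move: N_gt0; clear; nia.
Qed.

End Cut.

(* N = B`! is divisible by every exponent up to B; the other factors absorb the
   growth of exponents in the extension step. *)
Definition qbound (B : nat) : nat := (2 * B`! * B`! * B.+1)%N.

Lemma same_type_extend_indep B W a a' s : same_type (qbound B) W a a' -> 0 < s ->
  (forall c, bounded B W.+1 c -> 0 < c W -> monom W.+1 (extend a W s) c != 1) ->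
  exists2 s', 0 < s' & same_type B W.+1 (extend a W s) (extend a' W s').
Proof.
move=> st s0 indep; have [pa pa' st_a] := st.
set N := B`!; have N0 : (0 < N)%N := fact_gt0 B; have BN : (B <= N)%N := fact_geq B.
have dvdN k : (0 < k <= B)%N -> (k %| N)%N := @dvdn_fact k B.
have N_le_qbound : (N <= qbound B)%N by rewrite /qbound -/N; nia.
have [d [c1 [dN c1W c1_range c1_pow c1_min]]] := root_exponent N0 pa s0.
have [y y0 y_root] := partner_root st s0 N0 dN c1W c1_range c1_pow N_le_qbound.
have [q q_prime q_fresh] := fresh_prime W.+1 (extend a' W y).
have {}q_fresh i : (i <= W)%N -> pval q (extend a' W y i) = 0.
  by move=> iW; apply: q_fresh => //; apply/lt0r_neq0/(positive_extend pa' y0 iW).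
set t := y * q%:R ^+ (N %/ d).
have t0 : 0 < t by rewrite mulr_gt0 // exprn_gt0 // ltr0n prime_gt0.
have st_cut : same_type (2 * (N * B)) W a a'.
  by apply: (same_type_le _ st); rewrite /qbound -/N; nia.
have [w w0 cut] := cut_extend N0 dvdN st_cut s0 t0 indep.
have s'0 : 0 < t * w ^+ N by rewrite mulr_gt0 // exprn_gt0.
exists (t * w ^+ N) => //.
have pe := positive_extend pa s0; have pe' := positive_extend pa' s'0.
split => // c bc; split; first exact: cut.
move=> n /andP[n0 nB]; set k := (N %/ n)%N.
have nk : (n * k)%N = N by rewrite mulnC divnK // dvdN ?n0.
have k0 : (0 < k)%N by rewrite divn_gt0 // dvdn_leq // dvdN ?n0.
rewrite (is_pow_exprM n (monom_gt0 c pe) k0) (is_pow_exprM n (monom_gt0 c pe') k0) nk.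
rewrite !exprnP -!monomZ.
have -> : monom W.+1 (extend a' W (t * w ^+ N)) (fun i => k%:Z * c i) =
    monom W.+1 (extend a' W t) (fun i => k%:Z * c i) * (w ^ (k%:Z * c W)) ^+ N.
  by rewrite !monom_extend expfzMl mulrA; congr (_ * _); rewrite !exprnP !exprz_exp mulrC.
have pt := positive_extend pa' t0.
rewrite is_powMr ?monom_gt0 //; last exact/is_pow_exprn/exprz_gt0.
apply: (is_pow_partner st s0 N0 dN c1W c1_range c1_pow c1_min y0 y_root q_prime q_fresh
  (K := N * B)).
  by rewrite /qbound -/N; nia.
move=> i iW; rewrite abszM absz_nat; apply: leq_mul; first exact: leq_div.
exact: bc.
Qed.

Lemma same_type_extend B W a a' s : same_type (qbound B) W a a' -> 0 < s ->
  exists2 s', 0 < s' & same_type B W.+1 (extend a W s) (extend a' W s').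
Proof.
move=> st s0; have [[c [bc cW0 dep]]|indep] := classic
  (exists c, [/\ bounded B W.+1 c, 0 < c W & monom W.+1 (extend a W s) c = 1]).
  apply: (same_type_extend_dep _ s0 bc cW0 dep); apply: (same_type_le _ st).
  by rewrite /qbound; have := fact_geq B; nia.
apply: same_type_extend_indep => // c bc cW0; apply/eqP => dep.
by apply: indep; exists c.
Qed.

(** * Assignments and formulas *)

Lemma monom_widen W W' a c : (W <= W')%N -> (forall i, (W <= i < W')%N -> a i = 1) ->
  monom W' a c = monom W a c.
Proof.
move=> WW' a1; rewrite /monom -!(big_mkord xpredT (fun i => a i ^ c i)).
rewrite (@big_cat_nat _ _ _ W) //= [X in _ * X = _](_ : _ = 1) ?mulr1 //.
by rewrite big_nat_cond big1 // => i /andP[/a1 -> _]; rewrite exp1rz.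
Qed.

Lemma monom_upd_extend W a b x c : (x < W)%N ->
  (forall v, v != x -> a v = b v) -> b x = 1 ->
  monom W a c =
  monom W.+1 (extend b W (a x)) (fun i => if i == W then c x else if i == x then 0 else c i).
Proof.
move=> xW ab bx1; rewrite monom_extend eqxx /monom (bigD1 (Ordinal xW)) //=.
rewrite [in RHS](bigD1 (Ordinal xW)) //= ltn_eqF // eqxx bx1 expr0z mul1r mulrC.
congr (_ * _); apply: eq_bigr => i ix.
have ix' : (i : nat) != x by apply: contraNneq ix => e; apply/eqP/val_inj.
by rewrite ltn_eqF // (negbTE ix') ab.
Qed.

(* Sending 0 to 1 makes every rational its sign times a positive rational. *)
Definition nzabs (q : rat) : rat := if q == 0 then 1 else `|q|.

Lemma nzabs_gt0 q : 0 < nzabs q.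
Proof. by rewrite /nzabs; case: eqP => // /eqP; rewrite normr_gt0. Qed.

Lemma nzabs1 : nzabs 1 = 1.
Proof. by rewrite /nzabs oner_eq0 normr1. Qed.

Lemma nzabs0 : nzabs 0 = 1.
Proof. by rewrite /nzabs eqxx. Qed.

Lemma sg_nzabs (q : rat) : q = Num.sg q * nzabs q.
Proof. by rewrite /nzabs; case: eqP => [->|_]; rewrite ?sgr0 ?mul0r // -numEsg. Qed.

Definition assign_equiv (B V : nat) (e e' : assignment) :=
  [/\ forall v, Num.sg (e v) = Num.sg (e' v),
      forall v, (V <= v)%N -> e v = 1 /\ e' v = 1
    & same_type B V (fun v => nzabs (e v)) (fun v => nzabs (e' v))].

Lemma assign_equiv_sym B V e e' : assign_equiv B V e e' -> assign_equiv B V e' e.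
Proof.
move=> [sg_e one st]; split=> [v|v /one[]|]; by [|move=> -> ->|apply: same_type_sym].
Qed.

Lemma assign_equiv_le B B2 V e e' : (B2 <= B)%N ->
  assign_equiv B V e e' -> assign_equiv B2 V e e'.
Proof. by move=> B2B [sg_e one st]; split => //; apply: same_type_le B2B st. Qed.

Fixpoint tvars (t : term) : seq nat :=
  match t with TVar x => [:: x] | TMul t1 t2 => tvars t1 ++ tvars t2 end.

Lemma teval_prod e t : teval e t = \prod_(v <- tvars t) e v.
Proof. by elim: t => [x|t1 IH1 t2 IH2] /=; rewrite ?big_seq1 // big_cat IH1 IH2. Qed.

Lemma sg_teval e t : Num.sg (teval e t) = \prod_(v <- tvars t) Num.sg (e v).
Proof. by rewrite teval_prod; apply: (big_morph _ (@sgrM _)); rewrite sgr1. Qed.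

Lemma teval_sg_nzabs e t :
  teval e t = Num.sg (teval e t) * \prod_(v <- tvars t) nzabs (e v).
Proof.
rewrite sg_teval {1}teval_prod -big_split; apply: eq_bigr => v _; exact: sg_nzabs.
Qed.

Lemma monom_indicator V f y : (forall v, (V <= v)%N -> f v = 1) ->
  monom V f (fun v => (y == v)%:Z) = f y.
Proof.
move=> f1; case: (ltnP y V) => yV; last first.
  rewrite f1 // /monom big1 // => i _.
  by rewrite (_ : y == i = false) ?expr0z //; apply: gtn_eqF; apply: leq_trans yV.
rewrite /monom (bigD1 (Ordinal yV)) //= eqxx expr1z big1 ?mulr1 // => i.
by rewrite -val_eqE /= eq_sym => /negbTE ->; rewrite expr0z.
Qed.

Lemma prod_monom V f s : positive V f -> (forall v, (V <= v)%N -> f v = 1) ->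
  \prod_(v <- s) f v = monom V f (fun v => (count_mem v s)%:Z).
Proof.
move=> pf f1; elim: s => [|y s IH]; first by rewrite big_nil -(monom0 V f).
by rewrite big_cons IH -(monom_indicator y f1) -monomD.
Qed.

Lemma sg_mulr_cmp (x1 x2 N1 N2 N1' N2' : rat) :
  0 < N1 -> 0 < N2 -> 0 < N1' -> 0 < N2' ->
  (N1 < N2) = (N1' < N2') -> (N2 < N1) = (N2' < N1') ->
  (Num.sg x1 * N1 < Num.sg x2 * N2 <-> Num.sg x1 * N1' < Num.sg x2 * N2') /\
  (Num.sg x1 * N1 = Num.sg x2 * N2 <-> Num.sg x1 * N1' = Num.sg x2 * N2').
Proof.
move=> p1 p2 p1' p2' lt12 lt21.
have sgP (z : rat) : [\/ Num.sg z = 1, Num.sg z = -1 | Num.sg z = 0].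
  case: (ltrgt0P z) => [z0|z0|->]; [apply: Or31 | apply: Or32 | apply: Or33].
  - exact: gtr0_sg.
  - exact: ltr0_sg.
  - exact: sgr0.
have [lt|gt|eq] := ltrgtP N1 N2.
- have lt' : N1' < N2' by rewrite -lt12.
  by move: lt12 lt21; case: (sgP x1) => ->; case: (sgP x2) => -> _ _; split; split; lra.
- have gt' : N2' < N1' by rewrite -lt21.
  by move: lt12 lt21; case: (sgP x1) => ->; case: (sgP x2) => -> _ _; split; split; lra.
- have eq' : N1' = N2'.
    by apply/eqP; rewrite eq_le !leNgt -lt12 -lt21 eq ltxx.
  by move: lt12 lt21; case: (sgP x1) => ->; case: (sgP x2) => -> _ _; split; split; lra.
Qed.

Lemma bounded_count_sub B V (u w : seq nat) : (size u + size w <= B)%N ->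
  bounded B V (fun v => (count_mem v u)%:Z - (count_mem v w)%:Z).
Proof.
move=> szB i _; have hu : (count_mem i u <= size u)%N by apply: count_size.
have hw : (count_mem i w <= size w)%N by apply: count_size.
lia.
Qed.

Lemma assign_equiv_atom B V e e' t1 t2 : assign_equiv B V e e' ->
  (size (tvars t1) + size (tvars t2) <= B)%N ->
  (teval e t1 < teval e t2 <-> teval e' t1 < teval e' t2) /\
  (teval e t1 = teval e t2 <-> teval e' t1 = teval e' t2).
Proof.
move=> [sg_e one [pa pa' st]] sz.
have one_e v : (V <= v)%N -> nzabs (e v) = 1 by move=> /one[-> _]; apply: nzabs1.
have one_e' v : (V <= v)%N -> nzabs (e' v) = 1 by move=> /one[_ ->]; apply: nzabs1.
have sg_t t : Num.sg (teval e t) = Num.sg (teval e' t).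
  by rewrite !sg_teval; apply: eq_bigr => v _.
rewrite (teval_sg_nzabs e t1) (teval_sg_nzabs e t2) (teval_sg_nzabs e' t1).
rewrite (teval_sg_nzabs e' t2) !sg_t !(prod_monom _ pa one_e) !(prod_monom _ pa' one_e').
apply: sg_mulr_cmp; rewrite ?monom_gt0 // !monom_ltE //.
  by rewrite (st _ (bounded_count_sub sz)).1.
by rewrite addnC in sz; rewrite (st _ (bounded_count_sub sz)).1.
Qed.

Lemma same_type_clear B V V' x (e e' : assignment) : (V <= V')%N ->
  (forall v, (V <= v)%N -> e v = 1 /\ e' v = 1) ->
  same_type B V (fun v => nzabs (e v)) (fun v => nzabs (e' v)) ->
  same_type B V' (fun v => nzabs (upd e x 1 v)) (fun v => nzabs (upd e' x 1 v)).
Proof.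
move=> VV' one st; apply: (same_type_transfer (leqnn B) st) => [i _|i _|c bc].
- exact: nzabs_gt0.
- exact: nzabs_gt0.
exists (fun i => if i == x then 0 else c i).
  by move=> i iV; case: ifP => // _; apply: bc; apply: leq_trans iV VV'.
have drop_x (f : assignment) : (forall v, (V <= v)%N -> f v = 1) ->
    monom V' (fun v => nzabs (upd f x 1 v)) c =
    monom V (fun v => nzabs (f v)) (fun i => if i == x then 0 else c i).
  move=> f1; rewrite (@monom_widen V V' _ c VV'); last first.
    by move=> i /andP[Vi _]; rewrite /upd; case: ifP => _; rewrite ?f1 ?nzabs1.
  by apply: eq_monom => i _; rewrite /upd; case: ifP => _; rewrite ?nzabs1 ?exp1rz ?expr0z.
by split; apply: drop_x => v /one[].
Qed.

Lemma assign_equiv_forth B V e e' x r : assign_equiv (qbound B) V e e' ->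
  exists r', assign_equiv B (maxn V x.+1) (upd e x r) (upd e' x r').
Proof.
move=> [sg_e one st]; set V' := maxn V x.+1.
have xV' : (x < V')%N by rewrite leq_max ltnSn orbT.
have VV' : (V <= V')%N by rewrite leq_maxl.
(* The new value of x is stored at the fresh index V', its old slot being
   set to 1. *)
have st1 := same_type_clear x VV' one st.
have upd_ne (f : assignment) y v : v != x -> upd f x y v = f v.
  by move=> vx; rewrite /upd (negbTE vx).
have sg_upd y y' : Num.sg y = Num.sg y' ->
    forall v, Num.sg (upd e x y v) = Num.sg (upd e' x y' v).
  by move=> sgy v; rewrite /upd; case: ifP.
have one_upd y y' v : (V' <= v)%N -> upd e x y v = 1 /\ upd e' x y' v = 1.
  move=> V'v; have vx : v != x by apply: contraTneq V'v => ->; rewrite -ltnNge.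
  by rewrite !upd_ne //; apply: one; apply: leq_trans VV' V'v.
have [r0|r0] := eqVneq r 0.
  rewrite {}r0; exists 0; split; [exact: sg_upd | exact: one_upd |].
  have nzabs_upd0 (f : assignment) i : nzabs (upd f x 1 i) = nzabs (upd f x 0 i).
    by rewrite /upd; case: ifP; rewrite ?nzabs1 ?nzabs0.
  apply: eq_same_type (same_type_le _ st1) => [i _|i _|]; rewrite ?nzabs_upd0 //.
  by rewrite /qbound; have := fact_geq B; nia.
have [s' s'0 st2] := same_type_extend st1 (nzabs_gt0 r).
set r' := if 0 < r then s' else - s'.
have nzabs_r' : nzabs r' = s'.
  have r'_neq0 : r' != 0 by rewrite /r'; case: ifP => _; rewrite ?oppr_eq0 gt_eqF.
  by rewrite /nzabs (negbTE r'_neq0) /r'; case: ifP => _; rewrite ?normrN gtr0_norm.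
exists r'; split; [apply: sg_upd | exact: one_upd |].
  rewrite /r'; case: ifP => [r_gt0|/negbT]; first by rewrite !gtr0_sg.
  by rewrite -leNgt le_eqVlt (negbTE r0) /= => r_lt0; rewrite sgrN ltr0_sg // gtr0_sg.
apply: (same_type_transfer (leqnn B) st2) => [i _|i _|c bc].
- exact: nzabs_gt0.
- exact: nzabs_gt0.
exists (fun i => if i == V' then c x else if i == x then 0 else c i).
  move=> i; rewrite ltnS leq_eqVlt => /predU1P[->|iV]; first by rewrite eqxx; apply: bc.
  by rewrite ltn_eqF //; case: ifP => // _; apply: bc.
have move_x (f : assignment) y : monom V' (fun v => nzabs (upd f x y v)) c =
    monom V'.+1 (extend (fun v => nzabs (upd f x 1 v)) V' (nzabs y))
      (fun i => if i == V' then c x else if i == x then 0 else c i).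
  rewrite (@monom_upd_extend V' _ (fun v => nzabs (upd f x 1 v)) x c xV').
  - by rewrite /upd eqxx.
  - by move=> v vx; rewrite !upd_ne.
  - by rewrite /upd eqxx nzabs1.
by split; rewrite move_x ?nzabs_r'.
Qed.

Fixpoint formula_bound (phi : formula) : nat :=
  match phi with
  | FEq t1 t2 | FLt t1 t2 => (size (tvars t1) + size (tvars t2))%N
  | FNot p => formula_bound p
  | FAnd p q | FOr p q | FImp p q => maxn (formula_bound p) (formula_bound q)
  | FEx _ p | FAll _ p => qbound (formula_bound p)
  end.

Lemma sat_assign_equiv phi V e e' : assign_equiv (formula_bound phi) V e e' ->
  sat e phi <-> sat e' phi.
Proof.
elim: phi V e e' => [t1 t2|t1 t2|p IH|p IHp q IHq|p IHp q IHq|p IHp q IHq|x p IH|x p IH]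
  V e e' sim /=.
4-6: by rewrite (IHp _ _ _ (assign_equiv_le (leq_maxl _ _) sim))
       (IHq _ _ _ (assign_equiv_le (leq_maxr _ _) sim)).
- exact: (assign_equiv_atom sim (leqnn _)).2.
- exact: (assign_equiv_atom sim (leqnn _)).1.
- by rewrite (IH V e e' sim).
- split=> [[r]|[r']].
    by have [r' sim'] := assign_equiv_forth x r sim; exists r'; apply/(IH _ _ _ sim').
  have [r sim'] := assign_equiv_forth x r' (assign_equiv_sym sim).
  by exists r; apply/(IH _ _ _ (assign_equiv_sym sim')).
- split=> [H r'|H r].
    have [r sim'] := assign_equiv_forth x r' (assign_equiv_sym sim).
    by apply/(IH _ _ _ (assign_equiv_sym sim')).
  by have [r' sim'] := assign_equiv_forth x r sim; apply/(IH _ _ _ sim').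
Qed.

Definition assign_z (z : rat) : assignment := fun v => if v == 2%N then z else 1.

Lemma assign_equiv_primes B p q : prime p -> prime q ->
  assign_equiv B 3 (assign_z p%:R) (assign_z q%:R).
Proof.
move=> p_pr q_pr.
have p_gt1 (l : nat) : prime l -> (1 : rat) < l%:R by move=> /prime_gt1; rewrite ltr1n.
have monom_assign (l : nat) c : prime l ->
    monom 3 (fun v => nzabs (assign_z l%:R v)) c = l%:R ^ c 2%N.
  move=> l_pr; rewrite /monom !big_ord_recr big_ord0 /= /assign_z /= nzabs1 !exp1rz !mul1r.
  by rewrite /nzabs gt_eqF ?gtr0_norm // (lt_trans ltr01 (p_gt1 _ l_pr)).
have is_pow_prime (l : nat) (n : nat) (z : int) : prime l -> (0 < n)%N ->
    is_pow n (l%:R ^ z) <-> (n%:Z %| z)%Z.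
  move=> l_pr n0; split=> [[w w0 /(congr1 (pval l))]|/dvdzP[j ->]].
    rewrite pvalXz ?pnatr_eq0 -?lt0n ?prime_gt0 // pval_prime // pvalXn ?gt_eqF // mulr1.
    by move=> ->; apply/dvdzP; exists (pval l w); rewrite mulrC.
  exists (l%:R ^ j); first by rewrite exprz_gt0 // ltr0n prime_gt0.
  by rewrite exprnP exprz_exp.
split=> [v|v|].
- by rewrite /assign_z; case: ifP => _; rewrite // !gtr0_sg ?ltr0n ?prime_gt0.
- by rewrite /assign_z; case: eqP => // ->.
split=> [i _|i _|c bc]; rewrite ?nzabs_gt0 // !monom_assign //.
split=> [|n /andP[n0 _]]; last by rewrite !is_pow_prime.
by rewrite -[1](expr0z p%:R) -[X in _ = (_ < X)](expr0z q%:R) !ltr_eXz2l ?p_gt1.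
Qed.

Theorem corollary1 :
  ~ exists phi : formula,
      (forall v : nat, free_in v phi -> (v <= 2)%N) /\
      (forall e : assignment, sat e phi <-> e 2%N = e 0%N + e 1%N).
Proof.
move=> [phi [_ phi_add]].
have sim := assign_equiv_primes (formula_bound phi) (isT : prime 2) (isT : prime 3).
have : sat (assign_z 2%:R) phi by apply/phi_add.
by move/(sat_assign_equiv sim)/phi_add; rewrite /assign_z /=; lra.
Qed.
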